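(* Let $k\ge\ell\ge 2$ be integers with $k+\ell\ge6$, let $G$ be a finite digraph, let $Z\subseteq V(G)$ with $|Z|\ge2$, and let $v\in V(G)\setminus Z$. Then $$\Pr[\phi\in\mathcal S \text{ and } \phi(I\cup O)\subseteq Z\mid \phi(c)=v]\le(1-\delta(Z))\,(\mu(Z)-\rho^-_Z(v))^k(\rho^-_Z(v))^\ell\le(1-\delta(Z))\,\lambda_0\,\mu(Z)^m.$$
   Context: Put $m=k+\ell$ and $\lambda_0=k^k\ell^\ell/m^m$. Digraphs are finite, without loops; $xy$ denotes an arc from $x$ to $y$; two vertices are adjacent if at least one of $xy,yx$ is an arc. The oriented star $S_{k,\ell}$ has a center $c$, a set $O$ of $k$ out-leaves and a set $I$ of $\ell$ in-leaves; its arcs are exactly $co$ ($o\in O$) and $ic$ ($i\in I$). For a digraph $G$ on $n$ vertices, let $\phi$ be a uniformly random map from $V(S_{k,\ell})$ to $V(G)$ (all $n^{m+1}$ maps equally likely), and let $\mathcal S$ be the set of maps $\phi$ that are isomorphisms from $S_{k,\ell}$ onto the induced subdigraph $G[\mathrm{Im}\,\phi]$ (in particular injective). For $A\subseteq V(G)$: $\mu(A)=|A|/n$; $N^-_A(x)$ is the set of in-neighbours of $x$ lying in $A$, and $\rho^-_A(x)=|N^-_A(x)|/n$. For $Z\subseteq V(G)$ with $|Z|\ge2$, $\delta(Z)$ is the number of adjacent unordered pairs of vertices of $Z$ divided by $\binom{|Z|}{2}$. *)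

From mathcomp Require Import all_boot all_order all_algebra.
Set Implicit Arguments. Unset Strict Implicit. Unset Printing Implicit Defensive.
Import Order.TTheory GRing.Theory Num.Theory.
Local Open Scope ring_scope.

(* Vertices of the oriented star S_{k,l}: None = centre c,
   Some (inl o) = out-leaf o (o < k), Some (inr i) = in-leaf i (i < l). *)
Definition starV (k l : nat) := option ('I_k + 'I_l)%type.

Definition star_arc (k l : nat) (x y : starV k l) : bool :=
  match x, y with
  | None, Some (inl _) => true
  | Some (inr _), None => true
  | _, _ => false
  end.

(* phi is an isomorphism from S_{k,l} onto the induced subdigraph G[Im phi]
   (G given by its arc relation [arc]). *)
Definition star_iso (V : finType) (arc : rel V) (k l : nat)
  (phi : {ffun starV k l -> V}) : bool :=
  injectiveb phi &&
  [forall x, forall y, star_arc x y == arc (phi x) (phi y)].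

(* Pr[phi in S and phi(I u O) subset Z | phi(c) = v], phi uniform among all maps. *)
Definition cond_prob (R : realFieldType) (V : finType) (arc : rel V) (k l : nat)
  (Z : {set V}) (v : V) : R :=
  (#|[set phi : {ffun starV k l -> V} |
       [&& phi None == v, star_iso arc phi &
           [forall x : ('I_k + 'I_l)%type, phi (Some x) \in Z]]]|%:R)
  / (#|[set phi : {ffun starV k l -> V} | phi None == v]|%:R).

Definition mu (R : realFieldType) (V : finType) (A : {set V}) : R :=
  #|A|%:R / #|V|%:R.

Definition rho_in (R : realFieldType) (V : finType) (arc : rel V)
  (A : {set V}) (x : V) : R :=
  #|[set y in A | arc y x]|%:R / #|V|%:R.

Definition delta (R : realFieldType) (V : finType) (arc : rel V) (Z : {set V}) : R :=
  #|[set e : {set V} | [&& e \subset Z, #|e| == 2 &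
        [exists x in e, exists y in e, (x != y) && (arc x y || arc y x)]]]|%:R
  / ('C(#|Z|, 2))%:R.

Definition lambda0 (R : realFieldType) (k l : nat) : R :=
  (k%:R ^+ k * l%:R ^+ l) / ((k + l)%:R ^+ (k + l)).

(* Let D be the set of in-neighbours of v in Z and B = Z \ D.  A copy of the
   star centred at v sends its k out-leaves into B, its l in-leaves into D, and
   any two leaves to distinct nonadjacent vertices.  Among the |B|^k |D|^l maps
   respecting the slots, fixing the images of two leaves s, t and double
   counting shows  #copies * |F s| |F t| <= #(nonadjacent pairs of F s * F t) *
   |B|^k |D|^l.  Summing this over the four kinds of leaf pairs (k, l >= 2)
   gives  #copies * |Z|^2 <= #(nonadjacent ordered pairs of Z) * |B|^k |D|^l,
   and the ordered pairs of Z split into nonadjacent, diagonal and adjacent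
   ones, the latter numbering twice the edges of Z.  This is the first
   inequality after dividing by |V|^(k+l).  The second one is the AM-GM
   inequality for k copies of |B|/k and l copies of |D|/l. *)

From mathcomp Require Import all_boot all_order all_algebra.
From mathcomp Require Import ring lra zify.
Set Implicit Arguments. Unset Strict Implicit. Unset Printing Implicit Defensive.
Import Order.TTheory GRing.Theory Num.Theory.

Section Counting.
Variable V : finType.

Lemma card_ffun_family (X : finType) (F : X -> {set V}) :
  #|[set f : {ffun X -> V} | [forall x, f x \in F x]]| = \prod_x #|F x|.
Proof. by rewrite -(cardsXn F); apply: eq_card => f; rewrite !inE. Qed.

Lemma prod_pair (X : finType) (g : X -> nat) (a b : X) : a != b ->
  \prod_x g x = g a * g b * \prod_(x | (x != a) && (x != b)) g x.
Proof.
by move=> ab; rewrite (bigD1 a) //= (bigD1 b) 1?eq_sym //= mulnA.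
Qed.

(* Double counting: the maps of the family whose values at two distinct points
   a, b form a pair of P are counted by fibring over that pair; each fibre is a
   family in which F a and F b are replaced by singletons. *)
Lemma card_ffun_family_pair (X : finType) (F : X -> {set V}) (a b : X)
    (P : {set V * V}) : a != b -> P \subset setX (F a) (F b) ->
  #|[set f : {ffun X -> V} | [forall x, f x \in F x] && ((f a, f b) \in P)]|
    * (#|F a| * #|F b|) = #|P| * \prod_x #|F x|.
Proof.
move=> ab PF; set S := [set f : {ffun X -> V} | _].
pose Fp (p : V * V) x := if x == a then [set p.1] else if x == b then [set p.2] else F x.
have fibre p : p \in P -> \sum_(f in S | (f a, f b) == p) 1 = \prod_x #|Fp p x|.
  move=> pP; rewrite -card_ffun_family -sum1_card; apply: eq_bigl => f; rewrite !inE.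
  have /andP [p1a p2b] : (p.1 \in F a) && (p.2 \in F b).
    by have := subsetP PF p pP; rewrite inE.
  apply/andP/forallP => [[/andP [/forallP fF _] /eqP fp] x | fFp].
    rewrite /Fp; case: eqP => [->|_]; first by rewrite inE -fp.
    by case: eqP => [->|_]; [rewrite inE -fp | exact: fF].
  have fa : f a = p.1 by have := fFp a; rewrite /Fp eqxx inE => /eqP.
  have fb : f b = p.2 by have := fFp b; rewrite /Fp eq_sym (negbTE ab) eqxx inE => /eqP.
  rewrite fa fb -surjective_pairing pP eqxx !andbT; split => //; apply/forallP => x.
  have := fFp x; rewrite /Fp; case: eqP => [->|_]; first by rewrite inE => /eqP ->.
  by case: eqP => [->|_] //; rewrite inE => /eqP ->.
have fibre_size p : \prod_x #|Fp p x| * (#|F a| * #|F b|) = \prod_x #|F x|.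
  rewrite (prod_pair _ ab) [in RHS](prod_pair _ ab).
  rewrite /Fp eqxx eq_sym (negbTE ab) eqxx !cards1 !mul1n mulnC.
  by congr (_ * _); apply: eq_bigr => x /andP [/negbTE -> /negbTE ->].
rewrite -sum1_card (partition_big (fun f : {ffun X -> V} => (f a, f b)) (mem P)) /=;
  last by move=> f; rewrite inE => /andP [].
rewrite big_distrl /= (eq_bigr (fun _ => \prod_x #|F x|)) ?sum_nat_const // => p pP.
by rewrite fibre // fibre_size.
Qed.

Definition npairs (Q : rel V) (X Y : {set V}) : nat :=
  #|[set p in setX X Y | Q p.1 p.2]|.

Lemma npairsUl (Q : rel V) (X1 X2 Y : {set V}) : [disjoint X1 & X2] ->
  npairs Q (X1 :|: X2) Y = npairs Q X1 Y + npairs Q X2 Y.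
Proof.
move=> dis; rewrite /npairs -cardsUI.
have -> : [set p in setX X1 Y | Q p.1 p.2] :&: [set p in setX X2 Y | Q p.1 p.2] = set0.
  apply/setP => p; rewrite !inE; case: (boolP (p.1 \in X1)) => //= h1.
  by rewrite (disjointFr dis h1) !andbF.
by rewrite cards0 addn0; apply: eq_card => p; rewrite !inE -!andbA andb_orl.
Qed.

Lemma npairsUr (Q : rel V) (X Y1 Y2 : {set V}) : [disjoint Y1 & Y2] ->
  npairs Q X (Y1 :|: Y2) = npairs Q X Y1 + npairs Q X Y2.
Proof.
move=> dis; rewrite /npairs -cardsUI.
have -> : [set p in setX X Y1 | Q p.1 p.2] :&: [set p in setX X Y2 | Q p.1 p.2] = set0.
  apply/setP => p; rewrite !inE; case: (boolP (p.2 \in Y1)) => h1; rewrite ?andbF //=.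
  by rewrite (disjointFr dis h1) !andbF.
by rewrite cards0 addn0; apply: eq_card => p; rewrite !inE andb_orr andb_orl.
Qed.

Lemma npairs_compl (Q : rel V) (X Y : {set V}) :
  npairs Q X Y + npairs (fun x y => ~~ Q x y) X Y = #|X| * #|Y|.
Proof.
rewrite -cardsX -(cardsID [set p | Q p.1 p.2] (setX X Y)).
by congr (_ + _); apply: eq_card => p; rewrite !inE andbC.
Qed.

Lemma npairs_disjoint_le (Q1 Q2 Q : rel V) (X Y : {set V}) :
  (forall x y, Q1 x y -> ~~ Q2 x y) -> (forall x y, Q1 x y || Q2 x y -> Q x y) ->
  npairs Q1 X Y + npairs Q2 X Y <= npairs Q X Y.
Proof.
move=> dis12 sub; rewrite /npairs -cardsUI.
have -> : [set p in setX X Y | Q1 p.1 p.2] :&: [set p in setX X Y | Q2 p.1 p.2] = set0.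
  apply/setP => p; rewrite !inE andbACA andbb.
  by case: (boolP (Q1 _ _)) => [/dis12 /negbTE ->|]; rewrite ?andbF.
rewrite cards0 addn0; apply/subset_leq_card/subsetP => p; rewrite !inE.
by move=> /orP [] /andP [-> h] /=; apply: sub; rewrite h ?orbT.
Qed.

Lemma npairs_diag (Z : {set V}) : #|Z| <= npairs eq_op Z Z.
Proof.
rewrite /npairs -(card_imset Z (f := fun x : V => (x, x))); last by move=> x y [].
by apply/subset_leq_card/subsetP => p /imsetP [x xZ ->]; rewrite !inE xZ eqxx.
Qed.

End Counting.

Lemma double_bin2 n : 2 * 'C(n, 2) = n * n.-1.
Proof.
elim: n => [|n IH] //; rewrite binS bin1 mulnDr IH.
by case: n {IH} => [|n] //=; lia.
Qed.

Section Adjacency.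
Variables (V : finType) (arc : rel V).

Definition adjacent : rel V := fun x y => (x != y) && (arc x y || arc y x).
Definition nonadjacent : rel V := fun x y => (x != y) && ~~ (arc x y || arc y x).

Definition edges (Z : {set V}) : {set {set V}} :=
  [set e : {set V} | [&& e \subset Z, #|e| == 2 &
        [exists x in e, exists y in e, (x != y) && (arc x y || arc y x)]]].

Lemma card_edges_le (Z : {set V}) : #|edges Z| <= 'C(#|Z|, 2).
Proof.
rewrite -cards_draws; apply/subset_leq_card/subsetP => e; rewrite !inE.
by case/and3P => -> -> _.
Qed.

(* Each edge {x, y} of Z yields the two ordered adjacent pairs (x, y), (y, x). *)
Lemma adjacent_pairs (Z : {set V}) : 2 * #|edges Z| <= npairs adjacent Z Z.
Proof.
rewrite /npairs -[#|[set p in _ | _]|]sum1_card.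
rewrite (partition_big (fun p : V * V => [set p.1; p.2]) (mem (edges Z))) /=; last first.
  move=> [x y]; rewrite !inE /= => /andP [/andP [xZ yZ] /andP [xy axy]].
  rewrite cards2 xy /=; apply/andP; split.
    by apply/subsetP => u; rewrite !inE => /orP [] /eqP ->.
  apply/existsP; exists x; rewrite !inE eqxx /=; apply/existsP; exists y.
  by rewrite !inE eqxx orbT xy axy.
rewrite mulnC -sum_nat_const; apply: leq_sum => e.
rewrite inE => /and3P [eZ /eqP e2 /existsP [x /andP [xe /existsP [y /andP [ye /andP [xy axy]]]]]].
have exy : e = [set x; y].
  apply/eqP; rewrite eq_sym eqEcard e2 cards2 xy andbT.
  by apply/subsetP => u; rewrite !inE => /orP [] /eqP ->.
have xZ := subsetP eZ x xe; have yZ := subsetP eZ y ye.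
have -> : 2 = #|[set (x, y); (y, x)]|.
  by rewrite cards2; case: eqP => // [[]] /eqP; rewrite (negbTE xy).
rewrite sum1_card; apply/subset_leq_card/subsetP => p; rewrite !inE.
case/orP => /eqP -> /=; rewrite unfold_in /= !inE /= xZ yZ /adjacent /= exy.
  by rewrite xy axy eqxx.
by rewrite eq_sym xy orbC axy setUC eqxx.
Qed.

(* Ordered pairs of Z: the nonadjacent ones, the diagonal and the adjacent ones. *)
Lemma nonadjacent_pairs (Z : {set V}) :
  npairs nonadjacent Z Z + 2 * #|edges Z| <= 2 * 'C(#|Z|, 2).
Proof.
have compl := npairs_compl nonadjacent Z Z.
have other : npairs eq_op Z Z + npairs adjacent Z Z
    <= npairs (fun x y => ~~ nonadjacent x y) Z Z.
  apply: npairs_disjoint_le => x y; rewrite /adjacent /nonadjacent.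
    by move=> /eqP ->; rewrite eqxx.
  by case: (x == y); case: (arc x y || arc y x).
have := npairs_diag Z; have := adjacent_pairs Z; rewrite double_bin2.
case: #|Z| compl => [|n] /=; lia.
Qed.

End Adjacency.

Lemma big_option (T : finType) (g : option T -> nat) :
  \prod_x g x = g None * \prod_t g (Some t).
Proof.
by rewrite ![index_enum _]unlock [@Finite.enum in LHS]unlock /= big_cons big_map.
Qed.

Section StarCopies.
Variables (V : finType) (arc : rel V) (k l : nat) (Z : {set V}) (v : V).

Definition star_copies : {set {ffun starV k l -> V}} :=
  [set phi : {ffun starV k l -> V} | [&& phi None == v, star_iso arc phi &
       [forall x : ('I_k + 'I_l)%type, phi (Some x) \in Z]]].

Definition star_slots (B D : {set V}) (x : starV k l) : {set V} :=
  match x with None => [set v] | Some (inl _) => B | Some (inr _) => D end.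

Lemma card_star_slots (B D : {set V}) :
  \prod_x #|star_slots B D x| = #|B| ^ k * #|D| ^ l.
Proof.
by rewrite big_option big_sumType /= cards1 mul1n !prod_nat_const !card_ord.
Qed.

Lemma card_centred_maps :
  #|[set phi : {ffun starV k l -> V} | phi None == v]| = #|V| ^ (k + l).
Proof.
rewrite expnD -[#|V|]cardsT -card_star_slots -card_ffun_family.
apply: eq_card => f; rewrite !inE; apply/eqP/forallP => [fv [[o|i]|] | slots] /=.
- by rewrite inE.
- by rewrite inE.
- by rewrite inE fv.
by have := slots None; rewrite /= inE => /eqP.
Qed.

Let D := [set y in Z | arc y v].
Let B := Z :\: D.
Let F := star_slots B D.

(* In a copy, out-leaves are non-in-neighbours of v, in-leaves are in-neighbours,
   and distinct leaves are distinct and nonadjacent (the star has no arc between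
   leaves). *)
Lemma star_copy_shape (phi : {ffun starV k l -> V}) : phi \in star_copies ->
  (forall x, phi x \in F x)
  /\ (forall s t, s != t -> nonadjacent arc (phi (Some s)) (phi (Some t))).
Proof.
rewrite inE => /and3P [/eqP phiv /andP [/injectiveP inj /forallP iso] /forallP leafZ].
have arc_to_v y : star_arc y None = arc (phi y) v by rewrite -phiv; apply/eqP/(forallP (iso y)).
split.
  case => [[o|i]|] /=; last by rewrite inE phiv.
    by rewrite !inE leafZ -(arc_to_v (Some (inl o))).
  by rewrite !inE leafZ -(arc_to_v (Some (inr i))).
move=> s t st; rewrite /nonadjacent.
have -> : phi (Some s) != phi (Some t).
  by apply/negP => /eqP /inj [] /eqP; rewrite (negbTE st).
have /eqP <- := forallP (iso (Some s)) (Some t).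
have /eqP <- := forallP (iso (Some t)) (Some s).
by case: s {st} => ?; case: t.
Qed.

(* Fixing the images of two distinct leaves s, t: they form a nonadjacent pair
   of F s * F t, and the other vertices range over their slots; double counting
   (card_ffun_family_pair) gives the bound. *)
Lemma star_copies_pair_bound (s t : ('I_k + 'I_l)%type) : s != t ->
  #|star_copies| * (#|F (Some s)| * #|F (Some t)|)
    <= npairs (nonadjacent arc) (F (Some s)) (F (Some t)) * (#|B| ^ k * #|D| ^ l).
Proof.
move=> st; have st' : Some s != Some t :> starV k l by apply: contra st => /eqP [->].
rewrite -card_star_slots /npairs.
rewrite -(card_ffun_family_pair (F := F)
  (P := [set p in setX (F (Some s)) (F (Some t)) | nonadjacent arc p.1 p.2]) st'); last first.
  by apply/subsetP => p; rewrite !inE => /andP [].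
rewrite leq_mul2r; apply/orP; right; apply/subset_leq_card/subsetP => phi.
move=> /star_copy_shape [slots nonadj]; rewrite !inE.
by apply/andP; split; [apply/forallP | rewrite !slots nonadj].
Qed.

(* Summing the pair bound over the four kinds of leaf pairs (out/out, out/in,
   in/out, in/in), using Z = B + D. *)
Lemma star_copies_bound : (2 <= k)%N -> (2 <= l)%N ->
  #|star_copies| * (#|Z| * #|Z|)
    <= npairs (nonadjacent arc) Z Z * (#|B| ^ k * #|D| ^ l).
Proof.
move=> k2 l2.
have o0 : (0 < k)%N by lia. have o1 : (1 < k)%N by lia.
have i0 : (0 < l)%N by lia. have i1 : (1 < l)%N by lia.
have BB := star_copies_pair_bound (s := inl (Ordinal o0)) (t := inl (Ordinal o1)) isT.
have DD := star_copies_pair_bound (s := inr (Ordinal i0)) (t := inr (Ordinal i1)) isT.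
have BD := star_copies_pair_bound (s := inl (Ordinal o0)) (t := inr (Ordinal i0)) isT.
have DB := star_copies_pair_bound (s := inr (Ordinal i0)) (t := inl (Ordinal o0)) isT.
have DZ : D \subset Z by apply/subsetP => y; rewrite inE => /andP [].
have ZBD : Z = B :|: D by rewrite setUC -{1}(setID Z D) (setIidPr DZ).
have disBD : [disjoint B & D] by rewrite /B disjoints_subset setDE subsetIr.
rewrite ZBD cardsU (disjoint_setI0 disBD) cards0 subn0 npairsUl // !npairsUr //.
rewrite /F /= in BB DD BD DB.
by rewrite !(mulnDr, mulnDl) addnACA -!addnA !leq_add.
Qed.

(* The counting form of the first inequality of the theorem:
   |copies| <= (1 - E / C(|Z|,2)) |B|^k |D|^l with E the number of edges of Z. *)
Lemma star_copies_nat_bound : (2 <= k)%N -> (2 <= l)%N ->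
  #|star_copies| * 'C(#|Z|, 2) + #|edges arc Z| * (#|B| ^ k * #|D| ^ l)
    <= 'C(#|Z|, 2) * (#|B| ^ k * #|D| ^ l).
Proof.
move=> k2 l2; set T := (#|B| ^ k * #|D| ^ l)%N.
have copies := star_copies_bound k2 l2.
have pairs : (npairs (nonadjacent arc) Z Z + 2 * #|edges arc Z|) * T <= 2 * 'C(#|Z|, 2) * T.
  by rewrite leq_mul2r nonadjacent_pairs orbT.
have sq : #|star_copies| * (2 * 'C(#|Z|, 2)) <= #|star_copies| * (#|Z| * #|Z|).
  by rewrite double_bin2 leq_mul2l leq_mul2l leq_pred !orbT.
nia.
Qed.

End StarCopies.

Local Open Scope ring_scope.

(* AM-GM for k copies of b/k and l copies of d/l:
   b^k d^l <= k^k l^l / (k+l)^(k+l) * (b+d)^(k+l). *)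
Lemma two_block_AGM (R : realFieldType) (k l : nat) (b d : R) :
  (0 < k)%N -> (0 < l)%N -> 0 <= b -> 0 <= d ->
  b ^+ k * d ^+ l <= lambda0 R k l * (b + d) ^+ (k + l).
Proof.
move=> k0 l0 b0 d0.
have kR : k%:R != 0 :> R by rewrite pnatr_eq0 -lt0n.
have lR : l%:R != 0 :> R by rewrite pnatr_eq0 -lt0n.
have mR : (k + l)%:R != 0 :> R by rewrite pnatr_eq0 addn_eq0 negb_and -!lt0n k0.
pose E (i : ('I_k + 'I_l)%type) : R := if i is inl _ then b / k%:R else d / l%:R.
have E0 : {in predT, forall i, 0 <= E i}.
  by move=> [i|i] _; rewrite divr_ge0 ?ler0n.
have agm := (leif_AGM E0).1.
have card : #|@predT ('I_k + 'I_l)%type| = (k + l)%N.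
  by rewrite -[k in RHS]card_ord -[l in RHS]card_ord -card_sum.
have prodE : \prod_(i in predT) E i = (b / k%:R) ^+ k * (d / l%:R) ^+ l.
  rewrite (eq_bigl xpredT) // big_sumType /=.
  by rewrite [\prod_(i < k) _]prodr_const [\prod_(i < l) _]prodr_const !card_ord.
have sumE : \sum_(i in predT) E i = b + d.
  rewrite (eq_bigl xpredT) // big_sumType /=.
  rewrite [\sum_(i < k) _]sumr_const [\sum_(i < l) _]sumr_const !card_ord.
  by rewrite -[_ *+ k]mulr_natr -[_ *+ l]mulr_natr !divfK.
rewrite prodE sumE card in agm.
have kl0 : 0 <= k%:R ^+ k * l%:R ^+ l :> R by rewrite mulr_ge0 ?exprn_ge0 ?ler0n.
have -> : b ^+ k * d ^+ l = k%:R ^+ k * l%:R ^+ l * ((b / k%:R) ^+ k * (d / l%:R) ^+ l).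
  by rewrite !expr_div_n; field; rewrite !expf_neq0.
have -> : lambda0 R k l * (b + d) ^+ (k + l)
    = k%:R ^+ k * l%:R ^+ l * (((b + d) / (k + l)%:R) ^+ (k + l)).
  by rewrite /lambda0 expr_div_n; field; rewrite expf_neq0.
exact: ler_wpM2l.
Qed.

Section Densities.
Variables (R : realFieldType) (V : finType) (arc : rel V) (Z : {set V}) (v : V).

Lemma mu_split :
  mu R Z = #|Z :\: [set y in Z | arc y v]|%:R / #|V|%:R + rho_in R arc Z v.
Proof.
have DZ : [set y in Z | arc y v] \subset Z by apply/subsetP => y; rewrite inE => /andP [].
rewrite /mu /rho_in cardsD (setIidPr DZ) natrB ?subset_leq_card //.
by rewrite mulrBl subrK.
Qed.

Lemma delta_le1 : (2 <= #|Z|)%N -> 0 <= 1 - delta R arc Z.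
Proof.
move=> Z2; rewrite subr_ge0 ler_pdivrMr ?ltr0n ?bin_gt0 //.
by rewrite mul1r ler_nat card_edges_le.
Qed.

(* The first inequality of the theorem: star_copies_nat_bound divided by
   C(|Z|,2) |V|^(k+l). *)
Lemma cond_prob_bound (k l : nat) : (2 <= k)%N -> (2 <= l)%N -> (2 <= #|Z|)%N ->
  cond_prob R arc k l Z v <=
    (1 - delta R arc Z) * (#|Z :\: [set y in Z | arc y v]|%:R / #|V|%:R) ^+ k
      * (rho_in R arc Z v) ^+ l.
Proof.
move=> k2 l2 Z2; have counting := star_copies_nat_bound arc Z v k2 l2.
set S := #|star_copies _ _ _ _ _| in counting; set E := #|edges arc Z| in counting.
set C2 := 'C(#|Z|, 2) in counting; set T := (#|Z :\: _| ^ k * _)%N in counting.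
have nR : #|V|%:R != 0 :> R by rewrite pnatr_eq0 -lt0n; apply/card_gt0P; exists v.
have C2R : C2%:R != 0 :> R by rewrite pnatr_eq0 -lt0n bin_gt0.
have S_le : S%:R <= (1 - E%:R / C2%:R) * T%:R :> R.
  have -> : (1 - E%:R / C2%:R) * T%:R = (C2%:R * T%:R - E%:R * T%:R) / C2%:R :> R.
    by field.
  rewrite ler_pdivlMr ?ltr0n ?bin_gt0 //.
  by move: counting; rewrite -(ler_nat R) natrD !natrM; lra.
rewrite /cond_prob card_centred_maps natrX /rho_in !expr_div_n exprD.
have -> : (1 - delta R arc Z) * (#|Z :\: [set y in Z | arc y v]|%:R ^+ k / #|V|%:R ^+ k)
      * (#|[set y in Z | arc y v]|%:R ^+ l / #|V|%:R ^+ l)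
    = (1 - E%:R / C2%:R) * T%:R / (#|V|%:R ^+ k * #|V|%:R ^+ l) :> R.
  by rewrite /delta natrM !natrX; field; rewrite !expf_neq0.
by rewrite ler_wpM2r ?invr_ge0 ?mulr_ge0 ?exprn_ge0 ?ler0n.
Qed.

End Densities.

Unset Implicit Arguments.

Theorem lemma4 (R : realFieldType) (k l : nat) (V : finType) (arc : rel V)
  (Z : {set V}) (v : V) :
  (2 <= l)%N -> (l <= k)%N -> (6 <= k + l)%N ->
  irreflexive arc ->
  (2 <= #|Z|)%N -> v \notin Z ->
  cond_prob R arc k l Z v <=
    (1 - delta R arc Z) * (mu R Z - rho_in R arc Z v) ^+ k
      * (rho_in R arc Z v) ^+ l
  /\
  (1 - delta R arc Z) * (mu R Z - rho_in R arc Z v) ^+ k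
      * (rho_in R arc Z v) ^+ l
    <= (1 - delta R arc Z) * lambda0 R k l * (mu R Z) ^+ (k + l).
Proof.
move=> l2 lk _ _ Z2 _; have k2 : (2 <= k)%N := leq_trans l2 lk.
rewrite (mu_split R arc Z v) addrK; split; first exact: cond_prob_bound.
rewrite -mulrA -[_ * lambda0 R k l * _]mulrA ler_wpM2l ?delta_le1 //.
by apply: two_block_AGM; rewrite ?divr_ge0 ?ler0n //; lia.
Qed.
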